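(* Let the distinct values $v_{j,k}$ ($1\le j\le s$, $1\le k\le m_j$) be partitioned into classes $[v_{j,1},\dots,v_{j,m_j}]$, and let $X_1,\dots,X_n$ be finite domain variables. Introduce variables $Y_1,\dots,Y_{n+1}$ whose values are $s$-tuples of integers (with $Y_i[j]\in\{0,\dots,m_j\}$), with $Y_1=(0,\dots,0)$, and for each $1\le i\le n$ the ternary constraint $E(X_i,Y_i,Y_{i+1})$ which holds iff for every $1\le j\le s$: $X_i\neq v_{j,k}$ for all $k>Y_i[j]+1$, and $Y_{i+1}[j]=Y_i[j]+1$ if $X_i=v_{j,Y_i[j]+1}$, and $Y_{i+1}[j]=Y_i[j]$ otherwise. Then (a) an assignment to $X_1,\dots,X_n$ satisfies $\mathrm{Precedence}([[v_{1,1},\dots,v_{1,m_1}],\dots,[v_{s,1},\dots,v_{s,m_s}]],[X_1,\dots,X_n])$ iff it extends to an assignment of the $Y_i$ with $Y_1=(0,\dots,0)$ satisfying all $E(X_i,Y_i,Y_{i+1})$; and (b) if $D(Y_1)=\{(0,\dots,0)\}$ and each $E(X_i,Y_i,Y_{i+1})$ is GAC (with all domains nonempty), then this Precedence constraint is GAC on the domains of $X_1,\dots,X_n$.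
   Context: A support of a constraint is an assignment of a value from its domain to each of its variables that satisfies it; a constraint is GAC iff every value in every variable's domain belongs to some support. For distinct values $a,b$, $\mathrm{Precedence}([a,b],[X_1,\dots,X_n])$ holds iff $\min\{i \mid X_i=a \text{ or } i=n+1\} < \min\{i \mid X_i=b \text{ or } i=n+2\}$. $\mathrm{Precedence}([[v_{1,1},\dots,v_{1,m_1}],\dots,[v_{s,1},\dots,v_{s,m_s}]],[X_1,\dots,X_n])$ holds iff $\mathrm{Precedence}([v_{j,k},v_{j,k+1}],[X_1,\dots,X_n])$ holds for all $1\le j\le s$, $1\le k<m_j$. *)

(* All indices below are 0-based: the paper's X_i (1<=i<=n)
   is the i-1'th entry of a sequence X, the paper's v_{j,k} is the (k-1)'th
   entry of the (j-1)'th class, and the paper's Y_i is Ys (i-1). *)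
From mathcomp Require Import all_boot.
Set Implicit Arguments. Unset Strict Implicit. Unset Printing Implicit Defensive.

Section Defs.
Variable V : eqType.

(* min { i (1-based) | X_i = a  or  i = dflt }, for dflt > size X *)
Definition firstpos (a : V) (X : seq V) (dflt : nat) : nat :=
  if a \in X then (index a X).+1 else dflt.

Definition Precedence2 (a b : V) (X : seq V) : Prop :=
  firstpos a X (size X).+1 < firstpos b X (size X).+2.

Definition vjk (cls : seq (seq V)) (j k : nat) : option V :=
  onth (nth [::] cls j) k.

Definition Precedence (cls : seq (seq V)) (X : seq V) : Prop :=
  forall j k a b, vjk cls j k = Some a -> vjk cls j k.+1 = Some b ->
    Precedence2 a b X.

Definition Yvalid (cls : seq (seq V)) (y : seq nat) : Prop :=
  size y = size cls /\
  forall j, j < size cls -> nth 0 y j <= size (nth [::] cls j).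

Definition Econ (cls : seq (seq V)) (x : V) (y y' : seq nat) : Prop :=
  forall j, j < size cls ->
    (forall k, (nth 0 y j).+1 <= k -> vjk cls j k <> Some x) /\
    nth 0 y' j = (if vjk cls j (nth 0 y j) == Some x
                  then (nth 0 y j).+1 else nth 0 y j).

Definition GAC_E (cls : seq (seq V)) (DX : seq V) (DY DY' : seq (seq nat)) : Prop :=
  (forall x, x \in DX -> exists y y', [/\ y \in DY, y' \in DY' & Econ cls x y y']) /\
  (forall y, y \in DY -> exists x y', [/\ x \in DX, y' \in DY' & Econ cls x y y']) /\
  (forall y', y' \in DY' -> exists x y, [/\ x \in DX, y \in DY & Econ cls x y y']).

Definition GAC_Prec (cls : seq (seq V)) (n : nat) (DX : nat -> seq V) : Prop :=
  forall i a, i < n -> a \in DX i ->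
    exists X : seq V,
      [/\ size X = n,
          (forall k x, onth X k = Some x -> x \in DX k),
          onth X i = Some a &
          Precedence cls X].

End Defs.

From mathcomp Require Import all_boot zify.
Set Implicit Arguments. Unset Strict Implicit. Unset Printing Implicit Defensive.

(* For a class c = [v_1,..,v_m] and a prefix X_1..X_i of X, the number
   y = Y_{i+1}[j] "counts" c when, for every k, v_{k+1} occurs in X_1..X_i
   iff k < y: the values of the class already seen form an initial segment
   of length y (predicate [counts]).  The constraint E is exactly the rule
   that keeps this invariant from i to i+1 ([counts_step]), and forbids
   seeing a value beyond the next expected one.
   (a) If the Y's satisfy all E's, they count every class at every position
       ([counts_of_Econ]); when b = v_{k+2} first occurs at position p, E
       forbids it unless k < Y_p[j], i.e. unless v_{k+1} occurred before.
       Conversely, under Precedence the first occurrences along a class are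
       increasing ([first_occ_increasing]), so the length of the longest
       initial segment already seen counts the class ([counts_seen]) and
       satisfies E ([Econ_of_Precedence]).
   (b) GAC of every E lets one extend any supported value of Y_i backwards
       to Y_1 and forwards to Y_{n+1}; splicing these partial solutions
       around a value a of X_i gives a full solution, hence by (a) a support
       of Precedence containing X_i = a. *)

Section SeqFacts.
Variable T : eqType.
Implicit Types (s : seq T) (x a : T).

Lemma onth_size s k x : onth s k = Some x -> k < size s.
Proof. by move=> h; rewrite -onthTE h. Qed.

Lemma onth_lt s k : k < size s -> exists x, onth s k = Some x.
Proof. by rewrite -onthTE; case: onth => // x _; exists x. Qed.

Lemma onth_index s x : x \in s -> onth s (index x s) = Some x.
Proof. by move=> hx; rewrite onthE (nth_map x) ?index_mem ?nth_index. Qed.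

Lemma index_onth s i x : onth s i = Some x -> index x s <= i.
Proof.
move=> hx; rewrite leqNgt; apply/negP => /(before_find x).
by rewrite /= (onth_nth x _ _ _ hx) eqxx.
Qed.

Lemma index_ltS s i x a : onth s i = Some x ->
  (index a s < i.+1) = (index a s < i) || (a == x).
Proof.
move=> hx; case: eqP => [->|ax]; first by rewrite orbT ltnS index_onth.
rewrite orbF ltnS leq_eqVlt; case: eqP => //= ai; case: ax.
have ains : a \in s by rewrite -index_mem ai (onth_size hx).
by move: hx; rewrite -ai onth_index // => -[].
Qed.

Lemma Precedence2P a b s : Precedence2 a b s <-> (b \in s -> index a s < index b s).
Proof.
rewrite /Precedence2 /firstpos -!index_mem.
have := index_size a s; have := index_size b s.
case: (ltnP (index a s) (size s)) => ha; case: (ltnP (index b s) (size s)) => hb /=;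
  by split=> //= *; lia.
Qed.

Lemma uniq_class (cls : seq (seq T)) j :
  uniq (flatten cls) -> uniq (nth [::] cls j).
Proof.
elim: cls j => [|c cls IH] [|j] //=; rewrite cat_uniq => /and3P[Uc _ U] //.
exact: IH.
Qed.

Lemma vjk_size (cls : seq (seq T)) j k a : vjk cls j k = Some a -> j < size cls.
Proof. by rewrite /vjk ltnNge; case: leqP => // h; rewrite nth_default ?onth0n. Qed.

End SeqFacts.

Section Counting.
Variables (V : eqType) (X : seq V).
Implicit Types (c : seq V) (x a b : V).

Definition counts (i : nat) c (y : nat) : Prop :=
  forall k a, onth c k = Some a -> (index a X < i) = (k < y).

Definition prec_class c : Prop :=
  forall k a b, onth c k = Some a -> onth c k.+1 = Some b -> Precedence2 a b X.

Lemma counts0 c : counts 0 c 0.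
Proof. by move=> k a _; rewrite !ltn0. Qed.

Lemma counts_unique i c y y' : y <= size c -> y' <= size c ->
  counts i c y -> counts i c y' -> y = y'.
Proof.
have lt_counts z z' : z < z' <= size c -> counts i c z -> counts i c z' -> False.
  case/andP=> lt le Cz Cz'; have [a ha] := onth_lt (leq_trans lt le).
  by move: (Cz _ _ ha) (Cz' _ _ ha); rewrite ltnn lt => ->.
move=> hy hy' Cy Cy'; case: (ltngtP y y') => // lt; exfalso.
- by apply: (lt_counts y y' _ Cy Cy'); rewrite lt hy'.
- by apply: (lt_counts y' y _ Cy' Cy); rewrite lt hy.
Qed.

Lemma counts_step i c y x : uniq c -> onth X i = Some x ->
  (forall k, y < k -> onth c k <> Some x) ->
  counts i c y -> counts i.+1 c (if onth c y == Some x then y.+1 else y).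
Proof.
move=> Uc hx late Cy k a ha; rewrite (index_ltS _ hx) (Cy k a ha).
case: (eqVneq (onth c y) (Some x)) => [cy|ncy].
  have same : (a == x) = (k == y).
    apply/eqP/eqP => [ax|ky]; last by move: ha; rewrite ky cy => -[].
    apply: (@onth_inj _ c k y Uc); first by rewrite gtn_min (onth_size ha) orbT.
    by rewrite ha cy ax.
  by rewrite same [RHS]ltnS [RHS]leq_eqVlt orbC.
case: eqP => [ax|]; last by rewrite orbF.
rewrite orbT; subst a; case: (ltngtP k y) => // h.
- by case: (late k h ha).
- by move: ncy; rewrite -h ha eqxx.
Qed.

Lemma counts_of_Econ (cls : seq (seq V)) (Ys : nat -> seq nat) :
  uniq (flatten cls) -> Ys 0 = nseq (size cls) 0 ->
  (forall i x, onth X i = Some x -> Econ cls x (Ys i) (Ys i.+1)) ->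
  forall i j, i <= size X -> j < size cls ->
  counts i (nth [::] cls j) (nth 0 (Ys i) j).
Proof.
move=> U Y0 HE; elim=> [|i IH] j hi hj; first by rewrite Y0 nth_nseq hj; apply: counts0.
have [x hx] := onth_lt hi.
have [late ->] := HE i x hx j hj.
exact: (counts_step (uniq_class j U) hx late (IH j (ltnW hi) hj)).
Qed.

Lemma Precedence_of_Econ (cls : seq (seq V)) (Ys : nat -> seq nat) :
  uniq (flatten cls) -> Ys 0 = nseq (size cls) 0 ->
  (forall i x, onth X i = Some x -> Econ cls x (Ys i) (Ys i.+1)) ->
  Precedence cls X.
Proof.
move=> U Y0 HE j k a b ha hb; apply/Precedence2P => bX.
have hj := vjk_size hb; have hp := onth_index bX.
have [late _] := HE _ _ hp j hj.
rewrite (counts_of_Econ U Y0 HE (ltnW _) hj ha) ?index_mem // ltnNge.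
by apply/negP => h; apply: (late k.+1 h hb).
Qed.

Lemma first_occ_increasing c : prec_class c ->
  forall k k' a b, k' < k -> onth c k' = Some a -> onth c k = Some b ->
  b \in X -> index a X < index b X.
Proof.
move=> P; elim=> [|k IH] k' a b // hk ha hb bX.
have [m hm] := onth_lt (ltnW (onth_size hb)).
have mb := (Precedence2P m b X).1 (P _ _ _ hm hb) bX.
move: hk; rewrite ltnS leq_eqVlt => /orP[/eqP ek|lt].
  by move: ha; rewrite ek hm => -[<-].
have mX : m \in X by rewrite -index_mem (ltn_trans mb) ?index_mem.
exact: ltn_trans (IH k' a m lt ha hm mX) mb.
Qed.

Definition seen (i : nat) c : nat := find (fun v => i <= index v X) c.

Lemma counts_seen i c : prec_class c -> counts i c (seen i c).
Proof.
move=> P k a ha; rewrite /seen; set y := find _ c.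
case: (ltnP k y) => hk.
  by have := before_find a hk; rewrite /= (onth_nth a _ _ _ ha) => /negbT; rewrite -ltnNge.
have hy : y < size c by rewrite (leq_ltn_trans hk) ?(onth_size ha).
have /(nth_find a) /= iy : has (fun v => i <= index v X) c by rewrite has_find.
rewrite -/y in iy; apply/negbTE/negP => lt.
have aX : a \in X by rewrite -index_mem (leq_trans lt (leq_trans iy (index_size _ _))).
move: hk; rewrite leq_eqVlt => /orP[/eqP ek|yk].
  by move: iy; rewrite ek (onth_nth a _ _ _ ha) leqNgt lt.
have [m hm] := onth_lt hy; move: iy; rewrite (onth_nth a _ _ _ hm) leqNgt.
by rewrite (ltn_trans (first_occ_increasing P yk hm ha aX) lt).
Qed.

Lemma seen_no_late i c y x : prec_class c -> counts i c y -> onth X i = Some x ->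
  forall k, y < k -> onth c k <> Some x.
Proof.
move=> P Cy hx k hk hck.
have [m hm] := onth_lt (ltn_trans hk (onth_size hck)).
have xX : x \in X by apply/onthP; exists i.
have := first_occ_increasing P hk hm hck xX.
by rewrite ltnNge (leq_trans (index_onth hx)) // leqNgt (Cy _ _ hm) ltnn.
Qed.

Lemma Econ_of_Precedence (cls : seq (seq V)) : uniq (flatten cls) ->
  Precedence cls X ->
  exists Ys : nat -> seq nat,
    [/\ (forall i, i <= size X -> Yvalid cls (Ys i)), Ys 0 = nseq (size cls) 0 &
        (forall i x, onth X i = Some x -> Econ cls x (Ys i) (Ys i.+1))].
Proof.
move=> U P; exists (fun i => map (seen i) cls); split.
- by move=> i _; split=> [|j hj]; rewrite ?size_map // (nth_map [::]) // find_size.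
- by elim: cls {U P} => //= c cls ->; case: c.
move=> i x hx j hj; rewrite !(nth_map [::]) //.
set c := nth [::] cls j; have Pc : prec_class c := P j.
have late := seen_no_late Pc (counts_seen i Pc) hx; split=> //.
apply: (counts_unique (i := i.+1) (c := c)); rewrite ?find_size //.
- by case: eqP => [/onth_size|_]; rewrite ?find_size.
- exact: counts_seen.
exact: counts_step (uniq_class j U) hx late (counts_seen i Pc).
Qed.

End Counting.

Definition splice (T : Type) (q : nat) (f g : nat -> T) (k : nat) : T :=
  if k < q then f k else g k.

Lemma onth_mkseq (T : Type) (f : nat -> T) n k :
  onth (mkseq f n) k = if k < n then Some (f k) else None.
Proof.
rewrite onthE; case: ltnP => h; last by rewrite nth_default // size_map size_mkseq.
by rewrite (nth_map (f 0)) ?size_mkseq ?nth_mkseq.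
Qed.

Section Supports.
Variables (V : eqType) (cls : seq (seq V)) (n : nat).
Variables (DX : nat -> seq V) (DY : nat -> seq (seq nat)).
Hypothesis GAC : forall i, i < n -> GAC_E cls (DX i) (DY i) (DY i.+1).

Definition supported (p q : nat) (f : nat -> V) (Ys : nat -> seq nat) : Prop :=
  (forall k, p <= k <= q -> Ys k \in DY k) /\
  (forall k, p <= k < q -> f k \in DX k /\ Econ cls (f k) (Ys k) (Ys k.+1)).

Lemma supported_splice p q r f Ys g Zs :
  supported p q f Ys -> supported q r g Zs -> Ys q = Zs q ->
  supported p r (splice q f g) (splice q.+1 Ys Zs).
Proof.
move=> [SY SE] [TY TE] eq; rewrite /splice; split=> k /andP[pk kr].
  case: ltnP => h; first by apply: SY; rewrite pk -ltnS.
  by apply: TY; rewrite kr ltnW.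
rewrite !ltnS; case: (ltnP k q) => h; first by rewrite (ltnW h); apply: SE; rewrite pk.
move: h; rewrite leq_eqVlt => /orP[/eqP qk|h].
  by subst q; rewrite leqnn eq; apply: TE; rewrite leqnn.
by rewrite leqNgt h; apply: TE; rewrite kr ltnW.
Qed.

Lemma supported_single i x y y' : x \in DX i -> y \in DY i -> y' \in DY i.+1 ->
  Econ cls x y y' -> supported i i.+1 (fun _ => x) (splice i.+1 (fun _ => y) (fun _ => y')).
Proof.
move=> hx hy hy' E; rewrite /splice; split=> k /andP[ik ki].
  by case: ltnP => h; [have -> : k = i by lia | have -> : k = i.+1 by lia].
have -> : k = i by lia.
by rewrite ltnSn ltnn.
Qed.

(* Any supported value of Y_m extends backwards to a solution on [0,m]
   (x0 only fills the values of f outside the constrained range). *)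
Lemma supported_backward (x0 : V) m y : m <= n -> y \in DY m ->
  exists f Ys, Ys m = y /\ supported 0 m f Ys.
Proof.
elim: m y => [|m IH] y hm hy.
  exists (fun _ => x0), (fun _ => y); split=> //; split=> k; last by rewrite ltn0 andbF.
  by rewrite leqn0 => /eqP ->.
have [_ [_ back]] := GAC hm; have [x [y0 [hx hy0 E]]] := back y hy.
have [f [Ys [Ym S]]] := IH y0 (ltnW hm) hy0.
exists (splice m f (fun _ => x)), (splice m.+1 Ys (splice m.+1 (fun _ => y0) (fun _ => y))).
split; first by rewrite /splice !ltnn.
by apply: supported_splice S (supported_single hx hy0 hy E) _; rewrite /splice ltnSn.
Qed.

Lemma supported_forward (x0 : V) p y : p <= n -> y \in DY p ->
  exists f Ys, Ys p = y /\ supported p n f Ys.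
Proof.
move=> /subnKC; move: (n - p) => d; elim: d p y => [|d IH] p y hpn hy.
  exists (fun _ => x0), (fun _ => y); split=> //.
  split=> k /andP[pk kn]; last by exfalso; lia.
  by have -> : k = p by lia.
have hp : p < n by lia.
have [_ [fwd _]] := GAC hp; have [x [y1 [hx hy1 E]]] := fwd y hy.
have [g [Zs [Zp S]]] := IH p.+1 y1 (etrans (addSnnS p d) hpn) hy1.
exists (splice p.+1 (fun _ => x) g), (splice p.+2 (splice p.+1 (fun _ => y) (fun _ => y1)) Zs).
split; first by rewrite /splice ltnSn ifT.
apply: supported_splice (supported_single hx hy hy1 E) S _.
by rewrite /splice ltnn Zp.
Qed.

Lemma supported_through i a : i < n -> a \in DX i ->
  exists f Ys, f i = a /\ supported 0 n f Ys.
Proof.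
move=> hi ha; have [mid _] := GAC hi; have [y [y' [hy hy' E]]] := mid a ha.
have [f [Ys [Yi S1]]] := supported_backward a (ltnW hi) hy.
have [g [Zs [Zi S3]]] := supported_forward a hi hy'.
exists (splice i.+1 (splice i f (fun _ => a)) g),
       (splice i.+2 (splice i.+1 Ys (splice i.+1 (fun _ => y) (fun _ => y'))) Zs).
split; first by rewrite /splice ltnSn ltnn.
apply: supported_splice _ S3 _; last by rewrite /splice !ltnn Zi.
by apply: supported_splice S1 (supported_single ha hy hy' E) _; rewrite /splice ltnSn.
Qed.

End Supports.

Theorem mainTheorem9 (V : eqType) (cls : seq (seq V)) :
  uniq (flatten cls) ->
  all (fun c => 0 < size c) cls ->
  (* (a) *)
  (forall X : seq V,
     Precedence cls X <->
     exists Ys : nat -> seq nat,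
       [/\ (forall i, i <= size X -> Yvalid cls (Ys i)),
           Ys 0 = nseq (size cls) 0 &
           (forall i x, onth X i = Some x -> Econ cls x (Ys i) (Ys i.+1))])
  /\
  (* (b) *)
  (forall (n : nat) (DX : nat -> seq V) (DY : nat -> seq (seq nat)),
     (forall i, i < n -> DX i != [::]) ->
     (forall i, i <= n -> DY i != [::]) ->
     (forall i y, i <= n -> y \in DY i -> Yvalid cls y) ->
     DY 0 = [:: nseq (size cls) 0] ->
     (forall i, i < n -> GAC_E cls (DX i) (DY i) (DY i.+1)) ->
     GAC_Prec cls n DX).
Proof.
move=> U _; split.
  move=> X; split; first exact: Econ_of_Precedence.
  by case=> Ys [_ Y0 HE]; apply: Precedence_of_Econ U Y0 HE.
move=> n DX DY _ _ _ DY0 GAC i a hi ha.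
have [f [Ys [fi [SY SE]]]] := supported_through GAC hi ha.
have Y0 : Ys 0 = nseq (size cls) 0 by apply/eqP; rewrite -mem_seq1 -DY0 SY.
have onthX k x : onth (mkseq f n) k = Some x -> k < n /\ f k = x.
  by rewrite onth_mkseq; case: ltnP => // hk [<-].
exists (mkseq f n); split.
- exact: size_mkseq.
- by move=> k x /onthX [hk <-]; case: (SE k hk).
- by rewrite onth_mkseq hi fi.
by apply: Precedence_of_Econ U Y0 _ => k x /onthX [hk <-]; case: (SE k hk).
Qed.
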